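(* For every integer $d\geq 1$ and every finite abelian group $A$, the wreath product $A\wr\mathbb{Z}^d=\left(\bigoplus_{g\in\mathbb{Z}^d}A\right)\rtimes\mathbb{Z}^d$ (with $\mathbb{Z}^d$ acting by shifting coordinates) embeds in $\mathrm{IET}$.
   Context: $\mathrm{IET}$ denotes the group of interval exchange transformations of $[0,1)$: bijections of $[0,1)$ that are orientation-preserving piecewise isometries (piecewise translations), left-continuous, with finitely many discontinuity points. *)

From Stdlib Require Import Reals.
From mathcomp Require Import all_boot all_order all_algebra.
Set Implicit Arguments. Unset Strict Implicit. Unset Printing Implicit Defensive.
Import GRing.Theory.

Definition in01 (x : R) : Prop := Rle R0 x /\ Rlt x R1.

(* T : R -> R is regarded only through its restriction to [0,1).
   T is an IET iff it restricts to a bijection of [0,1) and there are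
   finitely many points 0 = a_0 < a_1 < ... < a_n = 1 such that T is a
   translation x |-> x + c_i on each [a_i, a_{i+1}). *)
Definition is_IET (T : R -> R) : Prop :=
  (forall x, in01 x -> in01 (T x)) /\
  (forall x y, in01 x -> in01 y -> T x = T y -> x = y) /\
  (forall y, in01 y -> exists x, in01 x /\ T x = y) /\
  exists (n : nat) (a c : nat -> R),
    a 0%N = R0 /\ a n = R1 /\
    (forall i, (i < n)%N -> Rlt (a i) (a i.+1)) /\
    (forall i x, (i < n)%N -> Rle (a i) x -> Rlt x (a i.+1) ->
       T x = Rplus x (c i)).

Local Open Scope ring_scope.

Notation Zd d := 'rV[int]_d.

(* finitely supported functions Z^d -> A : elements of (+)_{g in Z^d} A *)
Definition fin_supp (A : finZmodType) (d : nat) (f : Zd d -> A) : Prop :=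
  exists s : seq (Zd d), forall g, f g != 0 -> g \in s.

Definition zshift (A : finZmodType) (d : nat) (v : Zd d) (f : Zd d -> A)
  : Zd d -> A := fun g => f (g - v).

Definition wr_mul (A : finZmodType) (d : nat)
  (x y : (Zd d -> A) * Zd d) : (Zd d -> A) * Zd d :=
  ((fun g => x.1 g + zshift x.2 y.1 g), x.2 + y.2).

(* Choose alpha in R^d with rot v = \sum_i v_i alpha_i outside Z for every v <> 0: take
   alpha_i = ln p_(i+1) / ln p_0 for distinct primes p_j, by unique factorisation. Writing
   H = [0, 1/2) mod 1, the element (f, v) of A wr Z^d acts on A x R/Z by
     (a, theta) |-> (a + \sum_g f(g) 1_(H + rot g)(theta'), theta'),  theta' = theta + rot v.
   Stacking #|A| copies of the circle identifies A x R/Z with [0,1), and every (f, v) becomes a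
   bijection of [0,1) which is a translation away from finitely many points, i.e. an IET.
   The action is faithful because rot is injective modulo 1 and because the indicators of the
   half circles H + rot g, g in Z^d, are linearly independent: near the right end point of one
   of them all the others are constant. *)

From Stdlib Require Import Reals ClassicalEpsilon FunctionalExtensionality.
From HB Require Import structures.
From mathcomp Require Import all_boot all_order all_algebra.
From mathcomp Require Import reals Rstruct lra zify.

Set Implicit Arguments.
Unset Strict Implicit.
Unset Printing Implicit Defensive.

Import Order.TTheory GRing.Theory Num.Theory.
Local Open Scope ring_scope.

Section FiniteSupportSums.
Variables (I : eqType) (M : nmodType).
Implicit Types (F G : I -> M) (s : seq I).

Definition support_in F s := forall i, F i != 0 -> i \in s.

Definition finsupp F := exists s, support_in F s.

(* Only meaningful for finitely supported [F]; otherwise some finite partial sum. *)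
Definition fsum F : M :=
  \sum_(i <- undup (epsilon (inhabits [::]) (support_in F))) F i.

Lemma big_support_in s1 s2 F : uniq s1 -> uniq s2 ->
  support_in F s1 -> support_in F s2 -> \sum_(i <- s1) F i = \sum_(i <- s2) F i.
Proof.
move=> s1_uniq s2_uniq F_s1 F_s2.
have drop0 s : \sum_(i <- s) F i = \sum_(i <- s | F i != 0) F i.
  by rewrite [RHS]big_mkcond; apply: eq_bigr => i _; case: eqP => [->|].
rewrite drop0 [RHS]drop0 -big_filter -[RHS]big_filter.
apply/perm_big/uniq_perm; rewrite ?filter_uniq // => i.
by rewrite !mem_filter; case Fi: (F i != 0) => //=; rewrite F_s1 ?F_s2.
Qed.

Lemma fsumE s F : uniq s -> support_in F s -> fsum F = \sum_(i <- s) F i.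
Proof.
move=> s_uniq F_s; apply: big_support_in; rewrite ?undup_uniq // => i Fi_neq0.
by rewrite mem_undup; apply: (epsilon_spec _ _ (ex_intro _ s F_s)).
Qed.

Lemma eq_fsum F G : F =1 G -> fsum F = fsum G.
Proof. by move/functional_extensionality ->. Qed.

Lemma support_in_undup F s : support_in F s -> support_in F (undup s).
Proof. by move=> F_s i /F_s; rewrite mem_undup. Qed.

Lemma fsum0 : fsum (fun=> 0) = 0.
Proof. by rewrite (@fsumE [::]) ?big_nil // => i; rewrite eqxx. Qed.

Lemma fsumD F G : finsupp F -> finsupp G -> fsum (fun i => F i + G i) = fsum F + fsum G.
Proof.
move=> [sF F_sF] [sG G_sG]; set s := undup (sF ++ sG).
have s_uniq : uniq s := undup_uniq _.
have F_s : support_in F s by move=> i /F_sF; rewrite mem_undup mem_cat => ->.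
have G_s : support_in G s by move=> i /G_sG; rewrite mem_undup mem_cat orbC => ->.
rewrite !(fsumE s_uniq) ?big_split // => i /=.
by case: (F i =P 0) => [->|/eqP /F_s //]; rewrite add0r => /G_s.
Qed.

End FiniteSupportSums.

Section TranslatedSums.
Variables (I : zmodType) (M : nmodType).
Implicit Types (F : I -> M) (s : seq I).

Lemma support_in_translate F s v :
  support_in F s -> support_in (fun i => F (i - v)) [seq i + v | i <- s].
Proof. by move=> F_s i /F_s /(map_f (+%R^~ v)); rewrite subrK. Qed.

Lemma finsupp_translate F v : finsupp F -> finsupp (fun i => F (i - v)).
Proof. by move=> [s /(support_in_translate (v := v)) F_s]; exists [seq i + v | i <- s]. Qed.

Lemma fsum_translate F v : finsupp F -> fsum (fun i => F (i - v)) = fsum F.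
Proof.
move=> [s F_s]; have {}F_s := support_in_undup F_s.
rewrite (fsumE (undup_uniq s) F_s) (fsumE _ (support_in_translate (v := v) F_s)).
  by rewrite big_map; apply: eq_bigr => i _; rewrite addrK.
by rewrite map_inj_uniq ?undup_uniq //; apply: addIr.
Qed.

End TranslatedSums.

Lemma exists_pos_lower_bound (R : realFieldType) (r : seq R) (e : R) :
  0 < e -> all (fun x => 0 < x) r ->
  exists2 delta, 0 < delta <= e & all (fun x => delta <= x) r.
Proof.
elim: r => [|x r IH] e_gt0 /=; first by exists e; rewrite ?e_gt0 /=.
case/andP => x_gt0 /(IH e_gt0)-[delta /andP[delta_gt0 le_delta] r_ge].
exists (Num.min delta x); first by rewrite lt_min delta_gt0 x_gt0 ge_min le_delta.
rewrite ge_min lexx orbT /=; apply: sub_all r_ge => y le_y.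
by rewrite ge_min le_y.
Qed.

Section FractionalPart.
Variable R : archiRealFieldType.
Implicit Types (x y b gamma : R) (m : int).

Definition frac x : R := x - (Num.floor x)%:~R.

Definition lower_half x : bool := frac x < 2^-1.

Definition half_breaks gamma : seq R := [:: frac (- gamma); frac (2^-1 - gamma)].

Lemma frac_ge0 x : 0 <= frac x.
Proof. by rewrite subr_ge0 floor_le. Qed.

Lemma frac_lt1 x : frac x < 1.
Proof. by have := floorD1_gt x; rewrite /frac intrD; lra. Qed.

Lemma floor_itv01 x : 0 <= x < 1 -> Num.floor x = 0.
Proof. by move=> x01; apply/eqP; rewrite floor_eq. Qed.

Lemma frac_id x : 0 <= x < 1 -> frac x = x.
Proof. by move=> /floor_itv01; rewrite /frac => ->; rewrite subr0. Qed.

Lemma fracDz x m : frac (x + m%:~R) = frac x.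
Proof.
by rewrite /frac floorDrz ?intr_int // intrKfloor intrD opprD addrACA subrr addr0.
Qed.

Lemma fracDl x y : frac (frac x + y) = frac (x + y).
Proof. by rewrite addrAC -intrN fracDz. Qed.

Lemma frac_eq x y : frac x = frac y -> x - y = (Num.floor x - Num.floor y)%:~R.
Proof. by rewrite /frac intrB; lra. Qed.

Lemma floor_eq_no_int x y : x <= y -> (forall m, ~~ (x < m%:~R <= y)) ->
  Num.floor x = Num.floor y.
Proof.
move=> le_xy no_int; apply/esym/eqP; rewrite floor_eq (le_trans (floor_le x)) //=.
by rewrite ltNge; apply: contra (no_int (Num.floor x + 1)) => ->; rewrite floorD1_gt.
Qed.

Lemma floor_eq_double x y : x <= y -> Num.floor (x *+ 2) = Num.floor (y *+ 2) ->
  Num.floor x = Num.floor y.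
Proof.
move=> le_xy eq2; apply: floor_eq_no_int => // m; apply/negP => /andP[lt_xm le_my].
have : Num.floor (x *+ 2) < m *+ 2 by rewrite floor_lt_int rmorphMn; lra.
by rewrite eq2 ltNge floor_ge_int rmorphMn; lra.
Qed.

Lemma lower_halfE x : lower_half x = (Num.floor (x *+ 2) == (Num.floor x) *+ 2).
Proof.
rewrite /lower_half /frac floor_eq intrD rmorphMn (_ : 1%:~R = 1) //.
have := floor_le x; set n := (Num.floor x)%:~R.
by move=> le_nx; apply/idP/andP => [lt_x|[_ lt_x]]; [split|]; lra.
Qed.

Lemma lower_half_eq x y : x <= y -> Num.floor (x *+ 2) = Num.floor (y *+ 2) ->
  lower_half x = lower_half y.
Proof. by move=> le_xy eq2; rewrite !lower_halfE eq2 (floor_eq_double le_xy eq2). Qed.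

Lemma lower_half_fracDl x y : lower_half (frac x + y) = lower_half (x + y).
Proof. by rewrite /lower_half fracDl. Qed.

Lemma floor_double_const gamma theta1 theta2 :
  0 <= theta1 -> theta1 <= theta2 -> theta2 < 1 ->
  (forall b, b \in half_breaks gamma -> ~~ (theta1 < b <= theta2)) ->
  Num.floor ((theta1 + gamma) *+ 2) = Num.floor ((theta2 + gamma) *+ 2).
Proof.
move=> ge0_t1 le_t12 lt1_t2 no_break; apply: floor_eq_no_int; first lra.
move=> m; apply/negP => /andP[lt_m le_m].
pose b := m%:~R / 2 - gamma.
have b_in : theta1 < b <= theta2 by rewrite /b; apply/andP; split; lra.
have r_01 : (m %% 2)%Z = 0 \/ (m %% 2)%Z = 1.
  by have := @modz_ge0 m 2; have := @ltz_pmod m 2; lia.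
have /no_break : frac b \in half_breaks gamma.
  rewrite /b {1}(divz_eq m 2) intrD intrM mulrDl mulfK ?pnatr_eq0 // -addrA addrC fracDz.
  by case: r_01 => ->; rewrite ?mul0r ?sub0r ?mul1r !inE eqxx ?orbT.
by rewrite frac_id ?b_in //; lra.
Qed.

Lemma lower_half_left_const y delta : 0 <= delta -> delta *+ 2 <= frac (y *+ 2) ->
  lower_half (y - delta) = lower_half y.
Proof.
move=> delta_ge0; rewrite /frac => le_delta; apply: lower_half_eq; first lra.
have := floorD1_gt (y *+ 2); rewrite intrD (_ : 1%:~R = 1) // => lt_floor.
apply/eqP; rewrite floor_eq intrD (_ : 1%:~R = 1) //.
by move: le_delta lt_floor; set n := (Num.floor _)%:~R => *; apply/andP; split; lra.
Qed.

Lemma lower_half_free (M : zmodType) (I : eqType) (s : seq I) (gamma : I -> R)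
    (c : I -> M) :
  uniq s ->
  {in s &, forall i j, i != j -> forall m, (gamma i - gamma j) *+ 2 != m%:~R} ->
  (forall theta, \sum_(i <- s) c i *+ lower_half (theta + gamma i) = 0) ->
  {in s, forall i, c i = 0}.
Proof.
move=> s_uniq sep vanish i0 s_i0.
(* Only the i0-th indicator jumps at theta1; the others are constant just to its left. *)
pose theta1 := 2^-1 - gamma i0.
pose eps j := frac ((theta1 + gamma j) *+ 2).
have eps_gt0 j : j \in s -> j != i0 -> 0 < eps j.
  move=> s_j ne_j; rewrite lt_def frac_ge0 andbT.
  apply: contra (sep j i0 s_j s_i0 ne_j (Num.floor ((theta1 + gamma j) *+ 2) - 1)).
  by rewrite /eps /frac subr_eq0 intrB => /eqP <-; apply/eqP; rewrite /theta1; lra.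
have [delta /andP[delta_gt0 delta_le] /allP delta_eps] : exists2 delta,
    0 < delta <= 2^-1 & all (fun x => delta <= x) [seq eps j / 2 | j <- s & j != i0].
  apply: exists_pos_lower_bound; first by rewrite invr_gt0 ltr0n.
  apply/allP => x /mapP[j]; rewrite mem_filter => /andP[ne_j s_j] ->.
  by rewrite divr_gt0 ?eps_gt0.
have others : \sum_(j <- s | j != i0) c j *+ lower_half (theta1 - delta + gamma j) =
    \sum_(j <- s | j != i0) c j *+ lower_half (theta1 + gamma j).
  rewrite big_seq_cond [RHS]big_seq_cond; apply: eq_bigr => j /andP[s_j ne_j].
  have : delta <= eps j / 2.
    by apply/delta_eps/(map_f (fun j => eps j / 2)); rewrite mem_filter ne_j.
  by rewrite addrAC /eps => le_delta; rewrite lower_half_left_const //; lra.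
have jump_i0 : lower_half (theta1 + gamma i0) = false.
  by rewrite /theta1 subrK /lower_half frac_id ?ltxx //; apply/andP; split; lra.
have jump_i0' : lower_half (theta1 - delta + gamma i0) = true.
  rewrite /theta1 addrAC subrK /lower_half frac_id; first lra.
  by apply/andP; split; lra.
have := vanish theta1; have := vanish (theta1 - delta).
rewrite !(bigD1_seq i0) //= others jump_i0 jump_i0' mulr1n mulr0n add0r => + rest0.
by rewrite rest0 addr0.
Qed.

End FractionalPart.

Section Tower.
Variables (R : archiRealFieldType) (X : finType) (x0 : X).
Implicit Types (t : R) (p : X * R) (P : seq R).

Let N : R := #|X|%:R.

Let N_gt0 : 0 < N.
Proof. by rewrite ltr0n; apply/card_gt0P; exists x0. Qed.

Definition tower p : R := ((index p.1 (enum X))%:R + p.2) / N.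

Definition untower t : X * R :=
  (nth x0 (enum X) `|Num.floor (t * N)|%N, frac (t * N)).

Definition tower_breaks P : seq R := [seq tower (a, b) | a <- enum X, b <- 0 :: P].

Lemma tower_itv p : 0 <= p.2 < 1 -> 0 <= tower p < 1.
Proof.
case: p => a theta /= /andP[ge0 lt1].
have : (index a (enum X)).+1%:R <= N by rewrite ler_nat cardE index_mem mem_enum.
rewrite -addn1 natrD => lt_N.
have ge0_i := ler0n R (index a (enum X)).
by rewrite /tower ler_pdivlMr // ltr_pdivrMr // mul0r mul1r /=; apply/andP; split; lra.
Qed.

Lemma towerK p : 0 <= p.2 < 1 -> untower (tower p) = p.
Proof.
case: p => a theta /= theta01; rewrite /untower /tower mulfVK ?gt_eqF //.
rewrite pmulrn floorDzr ?intr_int // intrKfloor floor_itv01 // addr0 /=.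
rewrite nth_index ?mem_enum //.
by rewrite addrC fracDz frac_id.
Qed.

Lemma untower_itv t : 0 <= (untower t).2 < 1.
Proof. by rewrite frac_ge0 frac_lt1. Qed.

Lemma untowerK t : 0 <= t < 1 -> tower (untower t) = t.
Proof.
move=> /andP[ge0 lt1].
have ge0_fl : 0 <= Num.floor (t * N) by rewrite floor_ge0 mulr_ge0 // ltW.
have lt_fl : (`|Num.floor (t * N)| < #|X|)%N.
  by rewrite -ltz_nat gez0_abs // floor_lt_int -pmulrn -/N; have := N_gt0; nra.
rewrite /tower /untower /= index_uniq ?enum_uniq -?cardE // natr_absz ger0_norm //.
by rewrite /frac addrC subrK mulfK ?gt_eqF.
Qed.

Lemma towerB a theta1 theta2 :
  tower (a, theta2) - tower (a, theta1) = (theta2 - theta1) / N.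
Proof. by rewrite /tower -mulrBl /= opprD addrACA subrr add0r. Qed.

Lemma untower_floor_const P t1 t2 : 0 <= t1 -> t1 <= t2 -> t2 < 1 ->
    (forall b, b \in tower_breaks P -> ~~ (t1 < b <= t2)) ->
  Num.floor (t1 * N) = Num.floor (t2 * N).
Proof.
move=> ge0_t1 le_t12 lt1_t2 no_break; have N_pos := N_gt0.
apply: floor_eq_no_int => [|m]; first by rewrite ler_pM2r.
apply/negP => /andP[lt_m le_m].
have m_ge0 : 0 <= m by rewrite -(ler0z R); nra.
have m_lt : (`|m| < #|X|)%N by rewrite -ltz_nat gez0_abs // -(ltr_int R) -pmulrn -/N; nra.
pose a := nth x0 (enum X) `|m|.
have : tower (a, 0) \in tower_breaks P by apply: allpairs_f; rewrite ?mem_enum ?mem_head.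
move/no_break; apply/negP/negPn; rewrite /tower /a index_uniq ?enum_uniq -?cardE //.
by rewrite addr0 natr_absz ger0_norm // ltr_pdivlMr // ler_pdivrMr // lt_m le_m.
Qed.

Lemma untower_local P t1 t2 : 0 <= t1 -> t1 <= t2 -> t2 < 1 ->
    (forall b, b \in tower_breaks P -> ~~ (t1 < b <= t2)) ->
  [/\ (untower t2).1 = (untower t1).1, (untower t1).2 <= (untower t2).2 &
      forall b, b \in P -> ~~ ((untower t1).2 < b <= (untower t2).2)].
Proof.
move=> ge0_t1 le_t12 lt1_t2 no_break; have N_pos := N_gt0.
have floor_eq_t := untower_floor_const ge0_t1 le_t12 lt1_t2 no_break.
have same_level : (untower t2).1 = (untower t1).1 by rewrite /untower /= floor_eq_t.
have heightB : (untower t2).2 - (untower t1).2 = (t2 - t1) * N.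
  by rewrite /= /frac floor_eq_t mulrBl; set n := (Num.floor _)%:~R; lra.
split=> // [|b P_b]; first by rewrite -subr_ge0 heightB mulr_ge0 ?subr_ge0 // ltW.
have : tower ((untower t1).1, b) \in tower_breaks P.
  by apply: allpairs_f; rewrite ?mem_enum ?inE ?P_b ?orbT.
move/no_break; apply: contra => /andP[lt_b le_b].
have t1_itv : 0 <= t1 < 1 by apply/andP; split; lra.
have t2_itv : 0 <= t2 < 1 by apply/andP; split; lra.
have := towerB (untower t1).1 (untower t1).2 b.
have := towerB (untower t1).1 b (untower t2).2.
move=> E2 E1; rewrite -surjective_pairing untowerK // in E1.
rewrite -[in tower (_, (untower t2).2)]same_level -surjective_pairing untowerK // in E2.
apply/andP; split; first by rewrite -subr_gt0 E1 divr_gt0 // subr_gt0.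
by rewrite -subr_ge0 E2 divr_ge0 ?subr_ge0 // ltW.
Qed.
End Tower.

Section CircleRotations.
Variables (R : archiRealFieldType) (d : nat) (alpha : 'I_d -> R).

Definition rot (v : Zd d) : R := \sum_(i < d) (v 0 i)%:~R * alpha i.

Lemma rot_is_zmod_morphism : zmod_morphism rot.
Proof.
by move=> v w; rewrite /rot -sumrB; apply: eq_bigr => i _; rewrite !mxE intrB mulrBl.
Qed.

HB.instance Definition _ := GRing.isZmodMorphism.Build (Zd d) R rot rot_is_zmod_morphism.

End CircleRotations.

Section WreathAction.
Variables (R : archiRealFieldType) (d : nat) (alpha : 'I_d -> R) (A : finZmodType).
Hypothesis rot_int_free : forall v (m : int), rot alpha v = m%:~R -> v = 0.
Local Notation rot := (rot alpha).
Local Notation wreath := ((Zd d -> A) * Zd d)%type.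
Implicit Types (f : Zd d -> A) (v w : Zd d) (x y : wreath) (theta : R) (p : A * R).

Definition cocycle f v theta : A :=
  fsum (fun g => f g *+ lower_half (theta + rot (v - g))).

Definition act x p : A * R := (p.1 + cocycle x.1 x.2 p.2, frac (p.2 + rot x.2)).

Lemma support_in_cocycle f v theta s : support_in f s ->
  support_in (fun g => f g *+ lower_half (theta + rot (v - g))) s.
Proof. by move=> f_s g; case: lower_half; rewrite ?eqxx // => /f_s. Qed.

Lemma finsupp_cocycle f v theta :
  finsupp f -> finsupp (fun g => f g *+ lower_half (theta + rot (v - g))).
Proof. by move=> [s f_s]; exists s; apply: support_in_cocycle. Qed.

Lemma cocycleE f v theta s : uniq s -> support_in f s ->
  cocycle f v theta = \sum_(g <- s) f g *+ lower_half (theta + rot (v - g)).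
Proof. by move=> s_uniq f_s; apply/fsumE/support_in_cocycle. Qed.

Lemma cocycle_frac f v theta : cocycle f v (frac theta) = cocycle f v theta.
Proof. by apply: eq_fsum => g; rewrite lower_half_fracDl. Qed.

Lemma cocycle_rot f v w theta : cocycle f (w + v) theta = cocycle f v (theta + rot w).
Proof. by apply: eq_fsum => g; rewrite -addrA raddfD addrA. Qed.

Lemma cocycleD f1 f2 v theta : finsupp f1 -> finsupp f2 ->
  cocycle (fun g => f1 g + f2 g) v theta = cocycle f1 v theta + cocycle f2 v theta.
Proof.
move=> f1_fin f2_fin; rewrite /cocycle -fsumD; try exact: finsupp_cocycle.
by apply: eq_fsum => g; rewrite /= mulrnDl.
Qed.

Lemma cocycle_shift f v w theta : finsupp f ->
  cocycle (zshift w f) (w + v) theta = cocycle f v theta.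
Proof.
move=> f_fin; rewrite /cocycle -(fsum_translate w (finsupp_cocycle v theta f_fin)).
by apply: eq_fsum => g; rewrite /zshift opprB addrA (addrC v).
Qed.

Lemma act_mul x y p : finsupp x.1 -> finsupp y.1 -> act (wr_mul x y) p = act x (act y p).
Proof.
case: x y p => [f v] [f' v'] [a theta] /= f_fin f'_fin; rewrite /act /=; congr pair.
  rewrite cocycleD ?cocycle_shift ?cocycle_frac ?(addrC v) ?cocycle_rot //.
    by rewrite [X in a + X]addrC addrA.
  exact: finsupp_translate.
by rewrite fracDl raddfD [rot v + _]addrC addrA.
Qed.

Lemma act_unit x p : x.1 =1 (fun=> 0) -> x.2 = 0 -> act x p = (p.1, frac p.2).
Proof.
case: x => f v /= f0 ->; rewrite /act /cocycle raddf0 addr0 (eq_fsum (G := fun=> 0)).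
  by rewrite fsum0 addr0.
by move=> g; rewrite /= f0 mul0rn.
Qed.

Definition wr_inv x : wreath := (fun g => - x.1 (g + x.2), - x.2).

Lemma finsupp_wr_inv x : finsupp x.1 -> finsupp (wr_inv x).1.
Proof.
move=> /(finsupp_translate (- x.2)) [s f_s]; exists s => g.
by rewrite oppr_eq0 -[x.2]opprK => /f_s.
Qed.

Lemma wr_mulVx x : (wr_mul (wr_inv x) x).1 =1 (fun=> 0) /\ (wr_mul (wr_inv x) x).2 = 0.
Proof. by split=> [g|]; rewrite /= ?/zshift ?opprK addNr. Qed.

Lemma wr_mulxV x : (wr_mul x (wr_inv x)).1 =1 (fun=> 0) /\ (wr_mul x (wr_inv x)).2 = 0.
Proof. by split=> [g|]; rewrite /= ?/zshift ?subrK addrN. Qed.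

Definition circle_breaks v (s : seq (Zd d)) : seq R :=
  flatten [seq half_breaks (rot w) | w <- v :: [seq v - g | g <- s]].

Lemma act_local x s a theta1 theta2 : uniq s -> support_in x.1 s ->
    0 <= theta1 -> theta1 <= theta2 -> theta2 < 1 ->
    (forall b, b \in circle_breaks x.2 s -> ~~ (theta1 < b <= theta2)) ->
  (act x (a, theta2)).1 = (act x (a, theta1)).1 /\
  (act x (a, theta2)).2 - theta2 = (act x (a, theta1)).2 - theta1.
Proof.
move=> s_uniq f_s ge0_t1 le_t12 lt1_t2 no_break.
have floor_eq w : w \in x.2 :: [seq x.2 - g | g <- s] ->
    Num.floor ((theta1 + rot w) *+ 2) = Num.floor ((theta2 + rot w) *+ 2).
  move=> w_in; apply: floor_double_const => // b b_in.
  by apply: no_break; apply/flatten_mapP; exists w.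
split.
  rewrite /= !(cocycleE _ _ s_uniq f_s); congr (_ + _); apply: eq_big_seq => g s_g.
  rewrite (@lower_half_eq _ (theta1 + rot (x.2 - g)) (theta2 + rot (x.2 - g))) //.
    lra.
  by apply: floor_eq; apply: mem_behead; apply: (map_f (fun g => x.2 - g)).
have := floor_eq_double _ (floor_eq x.2 (mem_head _ _)); rewrite /= /frac.
by move=> ->; lra.
Qed.

Definition Phi x (t : R) : R := tower (act x (untower 0 t)).

Lemma act_itv x p : 0 <= (act x p).2 < 1.
Proof. by rewrite frac_ge0 frac_lt1. Qed.

Lemma Phi_itv x t : 0 <= Phi x t < 1.
Proof. exact: (tower_itv 0 (act_itv x (untower 0 t))). Qed.

Lemma Phi_mul x y t : finsupp x.1 -> finsupp y.1 -> Phi (wr_mul x y) t = Phi x (Phi y t).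
Proof. by move=> x_fin y_fin; rewrite /Phi towerK ?act_itv ?act_mul. Qed.

Lemma Phi_unit x t : x.1 =1 (fun=> 0) -> x.2 = 0 -> 0 <= t < 1 -> Phi x t = t.
Proof.
move=> x1_0 x2_0 t01; rewrite /Phi act_unit // frac_id; last exact: untower_itv.
by rewrite -surjective_pairing untowerK.
Qed.

Lemma Phi_wr_invK x t : finsupp x.1 -> 0 <= t < 1 -> Phi (wr_inv x) (Phi x t) = t.
Proof.
move=> x_fin t01; have [x1_0 x2_0] := wr_mulVx x.
by rewrite -Phi_mul ?Phi_unit //; apply: finsupp_wr_inv.
Qed.

Lemma Phi_wr_invVK x t : finsupp x.1 -> 0 <= t < 1 -> Phi x (Phi (wr_inv x) t) = t.
Proof.
move=> x_fin t01; have [x1_0 x2_0] := wr_mulxV x.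
by rewrite -Phi_mul ?Phi_unit //; apply: finsupp_wr_inv.
Qed.

Lemma Phi_local x s t1 t2 : uniq s -> support_in x.1 s ->
    0 <= t1 -> t1 <= t2 -> t2 < 1 ->
    (forall b, b \in tower_breaks A (circle_breaks x.2 s) -> ~~ (t1 < b <= t2)) ->
  Phi x t2 - t2 = Phi x t1 - t1.
Proof.
move=> s_uniq f_s ge0_t1 le_t12 lt1_t2 no_break.
have t1_itv : 0 <= t1 < 1 by apply/andP; split; lra.
have t2_itv : 0 <= t2 < 1 by apply/andP; split; lra.
have [same_level le_h no_break'] := untower_local (0 : A) ge0_t1 le_t12 lt1_t2 no_break.
rewrite /Phi -{2}(untowerK (0 : A) t1_itv) -{2}(untowerK (0 : A) t2_itv).
move: same_level le_h no_break' (untower_itv (0 : A) t1) (untower_itv (0 : A) t2).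
case: (untower 0 t1) => a h1; case: (untower 0 t2) => _ h2 /= ->.
move=> le_h no_break' /andP[h1_ge0 _] /andP[_ h2_lt1].
have [act_level act_shift] := act_local a s_uniq f_s h1_ge0 le_h h2_lt1 no_break'.
rewrite [act x (a, h2)]surjective_pairing [act x (a, h1)]surjective_pairing act_level.
have := towerB (act x (a, h1)).1 (act x (a, h1)).2 (act x (a, h2)).2.
have -> : (act x (a, h2)).2 - (act x (a, h1)).2 = h2 - h1 by lra.
by have := towerB a h1 h2; lra.
Qed.

Lemma rot_double_int_free v (m : int) : rot v *+ 2 = m%:~R -> v = 0.
Proof.
rewrite -raddfMn => /rot_int_free v2_0; apply/rowP => i; rewrite mxE.
have /eqP := congr1 (fun M : 'M[int]_(1, d) => M 0 i) v2_0.
by rewrite mulmxnE mxE mulrn_eq0 => /eqP.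
Qed.

Lemma Phi_inj x y : finsupp x.1 -> finsupp y.1 ->
    (forall t, 0 <= t < 1 -> Phi x t = Phi y t) ->
  x.1 =1 y.1 /\ x.2 = y.2.
Proof.
case: x y => [f v] [f' v'] /= [s f_s] [s' f'_s'] PhiE.
have actE p : 0 <= p.2 < 1 -> act (f, v) p = act (f', v') p.
  move=> p_itv; have actP z : act z p = untower 0 (Phi z (tower p)).
    by rewrite /Phi towerK // towerK // act_itv.
  by rewrite !actP PhiE // (tower_itv 0 p_itv).
have v_eq : v = v'.
  have := actE (0, 0); rewrite /= lexx ltr01 => /(_ isT) /(congr1 snd) /=.
  rewrite !add0r => /frac_eq.
  by rewrite -raddfB => /rot_int_free/subr0_eq.
subst v'; split=> // g; set S := undup (s ++ s'); have S_uniq : uniq S := undup_uniq _.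
have f_S : support_in f S by move=> h /f_s; rewrite mem_undup mem_cat => ->.
have f'_S : support_in f' S by move=> h /f'_s'; rewrite mem_undup mem_cat orbC => ->.
have vanish theta : \sum_(h <- S) (f h - f' h) *+ lower_half (theta + rot (v - h)) = 0.
  have := actE (0, frac theta); rewrite /= frac_ge0 frac_lt1 => /(_ isT) /(congr1 fst) /=.
  rewrite !add0r !cocycle_frac !(cocycleE _ _ S_uniq) // => eq_sums.
  by under eq_bigr do rewrite mulrnBl; rewrite sumrB eq_sums subrr.
have sep : {in S &, forall i j, i != j ->
    forall m : int, (rot (v - i) - rot (v - j)) *+ 2 != m%:~R}.
  move=> i j _ _ ne_ij m; apply/eqP; rewrite -raddfB => /rot_double_int_free.
  by move/subr0_eq/addrI/oppr_inj/eqP; rewrite (negbTE ne_ij).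
have := lower_half_free S_uniq sep vanish.
case: (boolP (g \in S)) => [g_S /(_ g g_S) /eqP | g_notS _].
  by rewrite subr_eq0 => /eqP.
by rewrite (eqP (contraNT (@f_S g) g_notS)) (eqP (contraNT (@f'_S g) g_notS)).
Qed.

End WreathAction.

Definition prime_seq (k : nat) : nat := iter k.+1 (fun m => s2val (prime_above m)) 0.

Lemma prime_seq_prime k : prime (prime_seq k).
Proof. by rewrite /prime_seq iterS; case: prime_above. Qed.

Lemma prime_seq_inj : injective prime_seq.
Proof.
have lt_next k : (prime_seq k < prime_seq k.+1)%N.
  by rewrite /prime_seq [X in (_ < X)%N]iterS; case: prime_above.
exact/incn_inj/leq_mono/(homo_ltn ltn_trans lt_next).
Qed.

Section PrimeProducts.
Variables (n : nat) (p : 'I_n -> nat).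
Hypotheses (p_inj : injective p) (p_prime : forall i, prime (p i)).

Lemma logn_prod_primes (k : 'I_n -> nat) i : logn (p i) (\prod_j p j ^ k j) = k i.
Proof.
have [_ ->] : (0 < \prod_j p j ^ k j /\
    logn (p i) (\prod_j p j ^ k j) = \sum_j logn (p i) (p j ^ k j))%N.
  apply: (big_ind2 (fun m l => 0 < m /\ logn (p i) m = l)%N).
  - by rewrite logn1.
  - by move=> m1 m2 l1 l2 [m1_gt0 <-] [m2_gt0 <-]; rewrite muln_gt0 m1_gt0 m2_gt0 lognM.
  - by move=> j _; rewrite expn_gt0 prime_gt0.
rewrite (bigD1 i) //= big1 ?addn0 => [|j ne_ji]; rewrite lognX logn_prime //.
  by rewrite eqxx muln1.
by rewrite (inj_eq p_inj) eq_sym (negbTE ne_ji) muln0.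
Qed.

Lemma prod_primes_inj (k k' : 'I_n -> nat) :
  (\prod_j p j ^ k j = \prod_j p j ^ k' j)%N -> k =1 k'.
Proof. by move=> eq_prod i; rewrite -logn_prod_primes eq_prod logn_prod_primes. Qed.

Lemma ln_prod_primes (k : 'I_n -> nat) :
  ln (\prod_j p j ^ k j)%:R = \sum_j (k j)%:R * ln (p j)%:R.
Proof.
suff [] : 0 < \prod_j ((p j ^ k j)%:R : R) /\
    ln (\prod_j ((p j ^ k j)%:R : R)) = \sum_j (k j)%:R * ln (p j)%:R by rewrite natr_prod.
apply: (big_ind2 (fun (x : R) l => 0 < x /\ ln x = l)).
- by rewrite ln_1.
- move=> x1 x2 l1 l2 [x1_gt0 <-] [x2_gt0 <-].
  by rewrite mulr_gt0 // ln_mult //; apply/RltP.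
- move=> j _; have p_gt0 : 0 < ((p j)%:R : R) by rewrite ltr0n prime_gt0.
  by rewrite natrX exprn_gt0 // -RpowE ln_pow ?INRE //; apply/RltP.
Qed.

Lemma ln_primes_free (e : 'I_n -> int) :
  \sum_i (e i)%:~R * ln (p i)%:R = 0 -> forall i, e i = 0.
Proof.
move=> sum0; pose k i := if e i is Posz m then m else 0%N.
pose k' i := if e i is Negz m then m.+1 else 0%N.
have eE i : e i = (k i)%:Z - (k' i)%:Z.
  by rewrite /k /k'; case: (e i) => m; rewrite ?subr0 ?sub0r ?NegzE.
have prod_gt0 (l : 'I_n -> nat) : 0 < ((\prod_j p j ^ l j)%:R : R).
  by rewrite ltr0n prodn_gt0 // => j; rewrite expn_gt0 prime_gt0.
suff eq_prod : (\prod_j p j ^ k j = \prod_j p j ^ k' j)%N.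
  by move=> i; rewrite eE (prod_primes_inj eq_prod) subrr.
apply/eqP; rewrite -(eqr_nat R); apply/eqP/ln_inv; try exact/RltP/prod_gt0.
apply/eqP; rewrite !ln_prod_primes -subr_eq0 -sumrB -[X in _ == X]sum0; apply/eqP.
by apply: eq_bigr => i _; rewrite eE intrB -!pmulrn mulrBl.
Qed.

End PrimeProducts.

Section LogPrimeRotations.
Variable d : nat.

Definition log_prime_ratio (i : 'I_d) : R := ln (prime_seq i.+1)%:R / ln (prime_seq 0)%:R.

Lemma rot_log_prime_ratio_free (v : Zd d) (m : int) : rot log_prime_ratio v = m%:~R -> v = 0.
Proof.
rewrite /rot => rot_m; have l0_neq0 : ln (prime_seq 0)%:R != 0.
  apply/eqP/ln_neq_0; last by apply/RltP; rewrite ltr0n prime_gt0 ?prime_seq_prime.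
  by apply/eqP; rewrite pnatr_eq1 gtn_eqF // prime_gt1 // prime_seq_prime.
(* the exponents (-m, v) of the primes p_0, ..., p_d *)
pose e (i : 'I_d.+1) := if unlift ord0 i is Some j then v 0 j else - m.
have p_inj : injective (fun i : 'I_d.+1 => prime_seq i).
  by move=> i j /prime_seq_inj/val_inj.
have sum_v : \sum_(j < d) (v 0 j)%:~R * ln ((prime_seq j.+1)%:R : R) =
    m%:~R * ln (prime_seq 0)%:R.
  rewrite -rot_m mulr_suml; apply: eq_bigr => j _.
  by rewrite /log_prime_ratio mulrA divfK.
have := @ln_primes_free _ _ p_inj (fun i => prime_seq_prime i) e.
rewrite big_ord_recl /e unlift_none; under eq_bigr do rewrite liftK lift0.
rewrite sum_v intrN mulNr addNr => /(_ erefl) e0; apply/rowP => j; rewrite mxE.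
by have := e0 (lift ord0 j); rewrite /e liftK.
Qed.
End LogPrimeRotations.

Section PiecewiseTranslations.
Variable R : realFieldType.
Implicit Types (T : R -> R) (l m r : R).

Definition piecewise_translation T l r := exists (n : nat) (a c : nat -> R),
  [/\ a 0%N = l, a n = r, forall i, (i < n)%N -> a i < a i.+1 &
      forall i x, (i < n)%N -> a i <= x -> x < a i.+1 -> T x = x + c i].

Lemma piecewise_translation_cat T l m r :
  piecewise_translation T l m -> piecewise_translation T m r ->
  piecewise_translation T l r.
Proof.
move=> [n1 [a1 [c1 [a1_0 a1_n lt_a1 T_a1]]]] [n2 [a2 [c2 [a2_0 a2_n lt_a2 T_a2]]]].
exists (n1 + n2)%N, (fun i => if (i <= n1)%N then a1 i else a2 (i - n1)%N).
exists (fun i => if (i < n1)%N then c1 i else c2 (i - n1)%N); split=> [||i|i x].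
- by rewrite leq0n.
- case: n2 a2_n {lt_a2 T_a2} => [|n2] a2_n; first by rewrite addn0 leqnn a1_n -a2_n.
  by rewrite ifF ?addKn //; lia.
- case: (ltngtP i n1) => [lt_in1|lt_n1i|->] lt_i; first exact: lt_a1 lt_in1.
    by rewrite subSn; [apply: lt_a2 | ]; lia.
  by rewrite subSnn a1_n -a2_0; apply: lt_a2; lia.
- case: (ltngtP i n1) => [lt_in1|lt_n1i|->] lt_i; first exact: T_a1 lt_in1.
    by rewrite subSn; [apply: T_a2 | ]; lia.
  by rewrite subSnn subnn a1_n -a2_0; apply: T_a2; lia.
Qed.

Lemma piecewise_translation_of_breaks T (B : seq R) l r : l < r ->
    (forall x y, l <= x -> x <= y -> y < r ->
       (forall b, b \in B -> ~~ (x < b <= y)) -> T y - y = T x - x) ->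
  piecewise_translation T l r.
Proof.
elim: B l r => [|b B IH] l r lt_lr locT.
  exists 1%N, (fun i => if i is 0%N then l else r), (fun=> T l - l).
  split=> // [[]|[] x] // _ le_lx lt_xr.
  suff : T x - x = T l - l by lra.
  by apply: locT => // b.
have locT' l' r' : l <= l' -> r' <= r -> (b <= l') || (r' <= b) ->
    forall x y, l' <= x -> x <= y -> y < r' ->
    (forall b', b' \in B -> ~~ (x < b' <= y)) -> T y - y = T x - x.
  move=> le_l le_r b_out x y le_x le_xy lt_y noB; apply: locT => [||| b'] //; try lra.
  by rewrite inE => /predU1P[->|/noB //]; case/orP: b_out => ?; apply/negP => /andP[]; lra.
case: (ltP l b) => [lt_lb|le_bl]; last by apply: IH => //; apply: locT'; rewrite ?le_bl.
case: (ltP b r) => [lt_br|le_rb]; last by apply: IH => //; apply: locT'; rewrite ?le_rb ?orbT.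
by apply: (@piecewise_translation_cat _ _ b); apply: IH => //; apply: locT';
  rewrite ?lexx ?orbT //; lra.
Qed.

End PiecewiseTranslations.

Lemma in01E x : in01 x <-> 0 <= x < 1.
Proof. by split=> [[/RleP -> /RltP ->] | /andP[/RleP ge0 /RltP lt1]]. Qed.

Lemma is_IET_of_breaks (T T' : R -> R) (B : seq R) :
    (forall x, 0 <= x < 1 -> 0 <= T x < 1) ->
    (forall x, 0 <= x < 1 -> 0 <= T' x < 1) ->
    (forall x, 0 <= x < 1 -> T' (T x) = x) ->
    (forall x, 0 <= x < 1 -> T (T' x) = x) ->
    (forall x y, 0 <= x -> x <= y -> y < 1 ->
       (forall b, b \in B -> ~~ (x < b <= y)) -> T y - y = T x - x) ->
  is_IET T.
Proof.
move=> T_itv T'_itv TK T'K locT; split; [|split; [|split]].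
- by move=> x /in01E /T_itv /in01E.
- by move=> x y /in01E x01 /in01E y01 Txy; rewrite -(TK x x01) Txy TK.
- by move=> y /in01E y01; exists (T' y); rewrite in01E T'_itv // T'K.
have [n [a [c [a0 an lt_a Ta]]]] := piecewise_translation_of_breaks ltr01 locT.
exists n, a, c; do !split=> //.
  by move=> i /lt_a /RltP.
by move=> i x lt_i /RleP le_x /RltP lt_x; apply: Ta.
Qed.

Theorem mainTheorem6 (d : nat) (A : finZmodType) (hd : (0 < d)%N) :
  exists Phi : ((Zd d -> A) * Zd d) -> (R -> R),
    (forall x, fin_supp x.1 -> is_IET (Phi x)) /\
    (forall x y, fin_supp x.1 -> fin_supp y.1 ->
       forall t, in01 t -> Phi (wr_mul x y) t = Phi x (Phi y t)) /\
    (forall x y, fin_supp x.1 -> fin_supp y.1 ->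
       (forall t, in01 t -> Phi x t = Phi y t) ->
       (forall g, x.1 g = y.1 g) /\ x.2 = y.2).
Proof.
pose alpha := @log_prime_ratio d.
have alpha_free := @rot_log_prime_ratio_free d.
exists (Phi alpha (A := A)); split; [|split].
- move=> x [s x_s]; have x_fin : finsupp x.1 by exists s.
  apply: (@is_IET_of_breaks _ (Phi alpha (wr_inv x : (Zd d -> A) * Zd d))
            (tower_breaks A (circle_breaks alpha x.2 (undup s)))).
  + by move=> t _; apply: Phi_itv.
  + by move=> t _; apply: Phi_itv.
  + by move=> t; apply: Phi_wr_invK.
  + by move=> t; apply: Phi_wr_invVK.
  + by move=> t1 t2; apply: Phi_local (undup_uniq s) (support_in_undup x_s).
- by move=> x y x_fin y_fin t _; apply: Phi_mul.
- move=> x y x_fin y_fin PhiE.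
  by apply: (Phi_inj alpha_free x_fin y_fin) => t /in01E /PhiE.
Qed.
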